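(* Let $f(X)=X^n+a_{n-1}X^{n-1}+\dots+a_1X+a_0\in A[X]$ with $n\geq 1$, $p\nmid n$ and $a_0\neq 0$. Write $l=v(a_0)$ and assume $v(a_{n-i})>il/n$ for all $i=1,\dots,n-1$. Then the number $R$ of roots of $f$ in $K^\ast=K\setminus\{0\}$ equals the number of roots of $X^n+a_0$ in $K^\ast$. Moreover, if $n\nmid l$ then $R=0$, and if $n\mid l$ then $R=\gcd(n,q-1)$ if $-\delta(a_0)$ is an $n$-th power in $\kappa$, and $R=0$ otherwise.
   Context: $K$ is a field complete with respect to a non-archimedean discrete valuation $v$, normalized by $v(\pi)=1$ for a uniformizer $\pi$ of the valuation ring $A=\{x\in K: v(x)\geq 0\}$; the residue field $\kappa=A/\pi A$ is finite with $q$ elements and characteristic $p$. For $a\in K^\ast$ with $v(a)=l$, the first non-zero digit of $a$ is $\delta(a)=\overline{a/\pi^l}\in\kappa^\ast$, the residue class of $a/\pi^l$. *)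

From HB Require Import structures.
From mathcomp Require Import all_boot all_order all_algebra all_field.
Set Implicit Arguments. Unset Strict Implicit. Unset Printing Implicit Defensive.
Import Order.TTheory GRing.Theory Num.Theory.
Local Open Scope ring_scope.

(* A complete discretely valued field K with valuation v : K -> int (the
   value at 0 is irrelevant, v 0 = +oo by convention, so every axiom is
   stated for nonzero arguments), uniformizer pi (v pi = 1), and residue
   field kappa = A / pi A, presented via the reduction map red : K -> kappa,
   which on A = {x | x = 0 \/ v x >= 0} is a surjective ring morphism whose
   kernel is pi A = {x | x = 0 \/ v x >= 1}. *)

Definition inA (K : fieldType) (v : K -> int) (x : K) : bool :=
  (x == 0) || (0 <= v x).

Definition vge (K : fieldType) (v : K -> int) (x : K) (N : int) : Prop :=
  x = 0 \/ N <= v x.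

Record cdvf (K : fieldType) (kappa : finFieldType) := CDVF {
  val_v : K -> int;
  unif : K;
  red : K -> kappa;
  v_mul : forall x y : K, x != 0 -> y != 0 -> val_v (x * y) = val_v x + val_v y;
  v_add : forall x y : K, x != 0 -> y != 0 -> x + y != 0 ->
            Num.min (val_v x) (val_v y) <= val_v (x + y);
  unif_neq0 : unif != 0;
  v_unif : val_v unif = 1;
  complete : forall u : nat -> K,
    (forall N : int, exists M : nat, forall m n : nat, (M <= m)%N -> (M <= n)%N ->
        vge val_v (u m - u n) N) ->
    exists L : K, forall N : int, exists M : nat, forall n : nat, (M <= n)%N ->
        vge val_v (u n - L) N;
  red_add : forall x y, inA val_v x -> inA val_v y -> red (x + y) = red x + red y;
  red_mul : forall x y, inA val_v x -> inA val_v y -> red (x * y) = red x * red y;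
  red_1 : red 1 = 1;
  red_surj : forall z : kappa, exists2 x, inA val_v x & red x = z;
  red_ker : forall x, inA val_v x -> (red x = 0 <-> vge val_v x 1)
}.

Definition delta K kappa (D : @cdvf K kappa) (a : K) : kappa :=
  red D (a / (unif D) ^ (val_v D a)).

Definition has_nonzero_roots (K : fieldType) (p : {poly K}) (N : nat) : Prop :=
  exists s : seq K, [/\ uniq s, forall x, (x \in s) = (x != 0) && root p x
                      & size s = N].

From HB Require Import structures.
From mathcomp Require Import all_boot all_order all_algebra all_field zify.
Import Order.TTheory GRing.Theory Num.Theory.
Local Open Scope ring_scope.
Set Implicit Arguments. Unset Strict Implicit. Unset Printing Implicit Defensive.

(* If x is a nonzero root of f, the hypothesis on the valuations of the
   coefficients makes either the leading or the constant term of f(x) strictly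
   dominant unless n v(x) = v(a_0) = l; hence there is no root unless n | l.
   If l = n m, then P(Y) = f(pi^m Y) / pi^(n m) has integral coefficients and
   reduces to Y^n + delta(a_0) modulo pi, whose nonzero roots are simple as
   p does not divide n.  By Hensel's lemma, x |-> (x / pi^m mod pi) is then a
   bijection from the nonzero roots of f onto the roots of Y^n = -delta(a_0) in
   kappa, of which there are gcd(n, q - 1) or none.  The count depends only on
   n and a_0, so it is the same for X^n + a_0. *)

Lemma expf_card_pred1 (F : finFieldType) (x : F) : x != 0 -> x ^+ (#|F| - 1) = 1.
Proof.
move=> x_neq0; apply: (mulIf x_neq0); rewrite mul1r -exprSr subn1.
by rewrite prednK ?expf_card // (ltn_trans _ (finNzRing_gt1 F)).
Qed.

Lemma card_unity_roots (F : finFieldType) (n : nat) : (0 < n)%N ->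
  #|[pred w : F | w ^+ n == 1]| = gcdn n (#|F| - 1).
Proof.
move=> n_gt0; set N := (#|F| - 1)%N.
have N_gt0 : (0 < N)%N by rewrite subn_gt0 finNzRing_gt1.
have [z zN] : exists z : F, N.-primitive_root z.
  have : has N.-primitive_root (enum [pred x : F | x != 0]).
    apply: cyclic.has_prim_root => //; last by rewrite -cardE cardC1 /N subn1.
    - by apply/allP=> x; rewrite mem_enum unity_rootE => /expf_card_pred1->.
    - exact: enum_uniq.
  by case/hasP=> z _; exists z.
set d := gcdn n N; have dN : (d %| N)%N by apply: dvdn_gcdr.
have zd := dvdn_prim_root zN dN; set w := z ^+ (N %/ d) in zd.
rewrite -[d]card_ord -(@card_codom _ _ (fun i : 'I_d => w ^+ i)); last first.
  move=> i j /eqP; rewrite (eq_prim_root_expr zd) !modn_small //.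
  by move/eqP/val_inj.
apply: eq_card => x; rewrite inE /=; apply/idP/codomP => [/eqP xn1|[i ->]].
  have x_neq0 : x != 0.
    by apply: contra_eqN xn1 => /eqP->; rewrite expr0n (gtn_eqF n_gt0) eq_sym oner_eq0.
  have [m xm mn] := prim_order_exists n_gt0 xn1.
  have md : (m %| d)%N.
    by rewrite /d /N dvdn_gcd mn (prim_order_dvd xm) expf_card_pred1 ?eqxx.
  have xd : x ^+ d = 1 by apply/eqP; rewrite -(prim_order_dvd xm); exact: md.
  by have [i ->] := prim_rootP zd xd; exists i.
rewrite -exprM -(divnK (dvdn_gcdl n N)) -/d mulnA mulnC exprM.
by rewrite (prim_expr_order zd) expr1n.
Qed.

Lemma card_nth_roots (F : finFieldType) (n : nat) (c : F) : (0 < n)%N -> c != 0 ->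
  #|[pred z : F | z ^+ n == c]| =
  if [exists y : F, y ^+ n == c] then gcdn n (#|F| - 1) else 0%N.
Proof.
move=> n_gt0 c_neq0; case: existsP => [[y /eqP yn]|no_root]; last first.
  by apply: eq_card0 => z; rewrite inE; apply/negP => zn; apply: no_root; exists z.
have y_neq0 : y != 0.
  by apply: contraNneq c_neq0 => y0; rewrite -yn y0 expr0n (gtn_eqF n_gt0).
rewrite -card_unity_roots // -[RHS](card_image (mulIf y_neq0)).
apply: eq_card => z; rewrite !inE; apply/idP/imageP => [/eqP zn|[w]].
  by exists (z / y); rewrite ?divfK // inE expr_div_n zn yn divff.
by rewrite inE => /eqP wn ->; rewrite exprMn wn yn mul1r.
Qed.

Lemma has_nonzero_roots_unique (K : fieldType) (q : {poly K}) (N1 N2 : nat) :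
  has_nonzero_roots q N1 -> has_nonzero_roots q N2 -> N1 = N2.
Proof.
case=> s1 [s1_uniq s1_roots <-] [s2 [s2_uniq s2_roots <-]].
by apply/perm_size/uniq_perm => // x; rewrite s1_roots s2_roots.
Qed.

Lemma has_nonzero_roots_bij (K : fieldType) (S : finType) (q : {poly K})
    (phi : K -> S) (R : pred S) :
  let nzroot x := (x != 0) && root q x in
  {in nzroot &, injective phi} -> {in nzroot, forall x, phi x \in R} ->
  (forall z, z \in R -> exists2 x, nzroot x & phi x = z) ->
  has_nonzero_roots q #|R|.
Proof.
move=> nzroot phi_inj phi_R phi_onto.
have lift_seq (zs : seq S) : uniq zs -> {subset zs <= R} ->
    exists s : seq K, [/\ uniq s, forall x, (x \in s) = nzroot x && (phi x \in zs)
                        & size s = size zs].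
  elim: zs => [|z zs IH] /=; first by exists [::]; split=> // x; rewrite andbF.
  case/andP=> z_zs zs_uniq zzsR.
  have zsR : {subset zs <= R} by move=> y yzs; apply: zzsR; rewrite inE yzs orbT.
  have [s [s_uniq s_mem s_size]] := IH zs_uniq zsR.
  have [x x_root phi_x] := phi_onto z (zzsR z (mem_head z zs)).
  exists (x :: s); split=> /=; last by rewrite s_size.
    by rewrite s_uniq s_mem phi_x (negbTE z_zs) andbF.
  move=> y; rewrite in_cons s_mem inE; apply/idP/idP => [/orP[/eqP->|]|].
  - by rewrite x_root phi_x eqxx.
  - by case/andP=> -> ->; rewrite orbT.
  case/andP=> y_root /orP[/eqP phi_y|->]; last by rewrite y_root orbT.
  by rewrite (phi_inj y x) ?eqxx // phi_y phi_x.
have [|s [s_uniq s_mem s_size]] := lift_seq (enum R) (enum_uniq R).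
  by move=> z; rewrite mem_enum.
exists s; split=> //; last by rewrite s_size cardE.
by move=> x; rewrite s_mem mem_enum andb_idr //; apply: phi_R.
Qed.

Lemma natr_neq0_gt0 (R : nzSemiRingType) (n : nat) : n%:R != 0 :> R -> (0 < n)%N.
Proof. by rewrite lt0n; apply: contraNneq => ->. Qed.

(* The two cases n v(x) < l and n v(x) > l of the valuation of a nonzero root
   x: the leading, resp. constant, term of f(x) then has the least valuation. *)
Lemma dominant_top (n i : nat) (a l V : int) : (i < n)%N -> n%:Z * a < l ->
  n%:Z * l <= n%:Z * V + i%:Z * l -> n%:Z * a + 1 <= V + i%:Z * a.
Proof. nia. Qed.

Lemma dominant_bottom (n i : nat) (a l V : int) : (0 < i)%N -> l < n%:Z * a ->
  n%:Z * l <= n%:Z * V + i%:Z * l -> l + 1 <= V + i%:Z * a.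
Proof. nia. Qed.

Section Valuation.
Variables (K : fieldType) (kappa : finFieldType) (D : cdvf K kappa).
Local Notation v := (val_v D).
Local Notation A := (inA (val_v D)).
Local Notation rd := (red D).
Local Notation pi := (unif D).

Lemma val_one : v 1 = 0.
Proof. by have := @v_mul _ _ D 1 1 (oner_neq0 _) (oner_neq0 _); rewrite mulr1; lia. Qed.

Lemma val_opp x : x != 0 -> v (- x) = v x.
Proof.
have N1_neq0 : (-1 : K) != 0 by rewrite oppr_eq0 oner_eq0.
have vN1 : v (-1) = 0.
  by have := v_mul D N1_neq0 N1_neq0; rewrite mulrNN mulr1 val_one; lia.
by move=> x_neq0; rewrite -mulN1r (v_mul D N1_neq0 x_neq0) vN1 add0r.
Qed.

Lemma val_exp x k : x != 0 -> v (x ^+ k) = k%:Z * v x.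
Proof.
move=> x_neq0; elim: k => [|k IH]; first by rewrite expr0 val_one mul0r.
by rewrite exprS (v_mul D x_neq0 (expf_neq0 k x_neq0)) IH -addn1 PoszD mulrDl mul1r addrC.
Qed.

Lemma val_inv x : x != 0 -> v x^-1 = - v x.
Proof.
by move=> x_neq0; have := v_mul D x_neq0 (invr_neq0 x_neq0); rewrite divff // val_one; lia.
Qed.

Lemma val_unifX k : v (pi ^+ k) = k.
Proof. by rewrite val_exp ?unif_neq0 // v_unif mulr1. Qed.

Lemma val_unif_exprz (z : int) : v (pi ^ z) = z.
Proof.
case: z => k; first exact: val_unifX.
by rewrite NegzE -exprnN val_inv ?expf_neq0 ?unif_neq0 // val_unifX.
Qed.

Lemma vge0 N : vge v 0 N. Proof. by left. Qed.

Lemma vge_le x N M : M <= N -> vge v x N -> vge v x M.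
Proof. by move=> MN [->|xN]; [left|right; apply: le_trans xN]. Qed.

Lemma vgeN x N : vge v x N -> vge v (- x) N.
Proof.
case=> [->|xN]; first by rewrite oppr0; left.
have [->|x_neq0] := eqVneq x 0; first by rewrite oppr0; left.
by right; rewrite val_opp.
Qed.

Lemma vgeD x y N : vge v x N -> vge v y N -> vge v (x + y) N.
Proof.
case=> [->|xN]; first by rewrite add0r.
case=> [->|yN]; first by rewrite addr0; right.
have [->|x_neq0] := eqVneq x 0; first by rewrite add0r; right.
have [->|y_neq0] := eqVneq y 0; first by rewrite addr0; right.
have [->|xy_neq0] := eqVneq (x + y) 0; first by left.
by right; apply: le_trans (v_add D x_neq0 y_neq0 xy_neq0); rewrite le_min xN.
Qed.

Lemma vgeB x y N : vge v x N -> vge v y N -> vge v (x - y) N.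
Proof. by move=> xN yN; apply/vgeD/vgeN. Qed.

Lemma vgeM x y N M : vge v x N -> vge v y M -> vge v (x * y) (N + M).
Proof.
case=> [->|xN]; first by rewrite mul0r; left.
case=> [->|yM]; first by rewrite mulr0; left.
have [->|x_neq0] := eqVneq x 0; first by rewrite mul0r; left.
have [->|y_neq0] := eqVneq y 0; first by rewrite mulr0; left.
by right; rewrite (v_mul D x_neq0 y_neq0) lerD.
Qed.

Lemma vge_sum (I : Type) (r : seq I) (P : pred I) (F : I -> K) N :
  (forall i, P i -> vge v (F i) N) -> vge v (\sum_(i <- r | P i) F i) N.
Proof.
move=> FN; apply: (big_ind (fun x => vge v x N)) => //; first exact: vge0.
by move=> x y; apply: vgeD.
Qed.

Lemma inAP x : reflect (vge v x 0) (x \in A).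
Proof.
rewrite unfold_in /inA; apply: (iffP orP) => [[/eqP->|]|[->|]]; by [left|right|left|right].
Qed.

Fact inA_subring_closed : subring_closed A.
Proof.
split; first by apply/inAP; right; rewrite val_one.
  by move=> x y /inAP xA /inAP yA; apply/inAP/vgeB.
by move=> x y /inAP xA /inAP yA; apply/inAP; rewrite -[0]addr0; apply: vgeM.
Qed.

HB.instance Definition _ := GRing.isSubringClosed.Build K A inA_subring_closed.

Lemma addr_dominant_neq0 x y : x != 0 -> vge v y (v x + 1) -> x + y != 0.
Proof.
move=> x_neq0 [->|yx]; first by rewrite addr0.
rewrite addr_eq0; apply: contraTneq yx => x_eq.
by move: x_neq0; rewrite x_eq oppr_eq0 => y_neq0; rewrite val_opp // -ltNge ltzD1.
Qed.

Lemma sum_dominant_neq0 (I : finType) (F : I -> K) (i0 : I) : F i0 != 0 ->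
  (forall i, i != i0 -> vge v (F i) (v (F i0) + 1)) -> \sum_i F i != 0.
Proof.
by move=> Fi0_neq0 dom; rewrite (bigD1 i0) //=; apply/addr_dominant_neq0/vge_sum.
Qed.

(* The axioms of [red], restated with [_ \in A] so that they combine with the
   [rpred] lemmas of the subring [A]. *)
Lemma redD x y : x \in A -> y \in A -> rd (x + y) = rd x + rd y.
Proof. exact: red_add. Qed.

Lemma redM x y : x \in A -> y \in A -> rd (x * y) = rd x * rd y.
Proof. exact: red_mul. Qed.

Lemma red1 : rd 1 = 1.
Proof. exact: red_1. Qed.

Lemma red0 : rd 0 = 0.
Proof. by apply/(@red_ker _ _ D 0 _).2; [rewrite /inA eqxx|left]. Qed.

Lemma redN x : x \in A -> rd (- x) = - rd x.
Proof.
by move=> xA; apply/eqP; rewrite -addr_eq0 -redD ?rpredN // addNr red0.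
Qed.

Lemma redB x y : x \in A -> y \in A -> rd (x - y) = rd x - rd y.
Proof. by move=> xA yA; rewrite redD ?rpredN // redN. Qed.

Lemma redX x k : x \in A -> rd (x ^+ k) = rd x ^+ k.
Proof.
move=> xA; elim: k => [|k IH]; first by rewrite !expr0 red1.
by rewrite !exprS redM ?rpredX // IH.
Qed.

Lemma red_sum (I : Type) (r : seq I) (P : pred I) (F : I -> K) :
  (forall i, P i -> F i \in A) ->
  rd (\sum_(i <- r | P i) F i) = \sum_(i <- r | P i) rd (F i).
Proof.
move=> FA; apply: (proj2 (big_ind2 (fun x y => x \in A /\ rd x = y) _ _ _)).
- by rewrite rpred0 red0.
- by move=> x1 x2 y1 y2 [x1A <-] [x2A <-]; rewrite rpredD // redD.
- by move=> i Pi; rewrite FA.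
Qed.

Lemma val_delta_quot a : a != 0 -> v (a / pi ^ v a) = 0.
Proof.
move=> a_neq0; have pi_neq0 : pi ^ v a != 0 by rewrite expfz_neq0 ?unif_neq0.
by rewrite (v_mul D a_neq0) ?invr_neq0 // val_inv // val_unif_exprz subrr.
Qed.

Lemma delta_neq0 a : a != 0 -> delta D a != 0.
Proof.
move=> a_neq0; have u_neq0 : a / pi ^ v a != 0.
  by rewrite mulf_neq0 ?invr_neq0 ?expfz_neq0 ?unif_neq0.
have uA : a / pi ^ v a \in A by apply/inAP; right; rewrite val_delta_quot.
apply/eqP => /(red_ker uA) [/eqP|]; first by rewrite (negbTE u_neq0).
by rewrite val_delta_quot.
Qed.

Definition red_poly (P : {poly K}) : {poly kappa} := \poly_(i < size P) rd P`_i.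

Lemma coef_red_poly P i : (red_poly P)`_i = rd P`_i.
Proof. by rewrite coef_poly; case: ltnP => // /(nth_default 0)->; rewrite red0. Qed.

Lemma horner_red_poly_deriv P t :
  (red_poly P)^`().[t] = \sum_(i < size P) rd P`_i * (t ^+ i.-1 *+ i).
Proof.
rewrite /red_poly poly_def linear_sum horner_sum; apply: eq_bigr => i _.
by rewrite linearZ /= derivXn hornerZ hornerMn hornerXn.
Qed.

Definition diffq (P : {poly K}) (y z : K) :=
  \sum_(i < size P) P`_i * \sum_(j < i) z ^+ (i.-1 - j) * y ^+ j.

Lemma hornerB_diffq P y z : P.[z] - P.[y] = (z - y) * diffq P y z.
Proof.
rewrite !horner_coef /diffq -sumrB mulr_sumr; apply: eq_bigr => i _.
by rewrite -mulrBr subrXX mulrCA.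
Qed.

Section IntegralPoly.
Variable P : {poly K}.
Hypothesis P_int : forall i, P`_i \in A.

Lemma horner_inA y : y \in A -> P.[y] \in A.
Proof.
by move=> yA; rewrite horner_coef; apply: rpred_sum => i _; rewrite rpredM ?rpredX.
Qed.

Lemma red_horner y : y \in A -> rd P.[y] = (red_poly P).[rd y].
Proof.
move=> yA; rewrite horner_coef (horner_coef_wide _ (size_poly _ _)).
rewrite red_sum => [|i _]; last by rewrite rpredM ?rpredX.
by apply: eq_bigr => i _; rewrite coef_red_poly redM ?rpredX // redX.
Qed.

Lemma diffq_inA y z : y \in A -> z \in A -> diffq P y z \in A.
Proof.
move=> yA zA; apply: rpred_sum => i _; rewrite rpredM //.
by apply: rpred_sum => j _; rewrite rpredM ?rpredX.
Qed.

Lemma red_diffq y z : y \in A -> z \in A -> rd y = rd z ->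
  rd (diffq P y z) = (red_poly P)^`().[rd y].
Proof.
move=> yA zA yz; rewrite horner_red_poly_deriv red_sum => [|i _]; last first.
  by rewrite rpredM // rpred_sum // => j _; rewrite rpredM ?rpredX.
apply: eq_bigr => i _; rewrite redM ?rpred_sum // => [|j _]; last by rewrite rpredM ?rpredX.
rewrite red_sum => [|j _]; last by rewrite rpredM ?rpredX.
congr (_ * _); rewrite -[X in _ *+ X](card_ord i) -sumr_const; apply: eq_bigr => j _.
rewrite redM ?rpredX // !redX // -yz -exprD subnK //.
by have := ltn_ord j; lia.
Qed.

Lemma hensel_unique y1 y2 : y1 \in A -> y2 \in A -> root P y1 -> root P y2 ->
  rd y1 = rd y2 -> (red_poly P)^`().[rd y1] != 0 -> y1 = y2.
Proof.
move=> y1A y2A /eqP Py1 /eqP Py2 y12 simple.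
have := hornerB_diffq P y1 y2; rewrite Py1 Py2 subrr => /esym/eqP.
rewrite mulf_eq0 subr_eq0 => /orP[/eqP//|/eqP Q0].
by move: simple; rewrite -(red_diffq y1A y2A y12) Q0 red0 eqxx.
Qed.

Section NewtonIteration.
Variables (t : kappa) (u y0 : K).
Hypotheses (t_root : root (red_poly P) t) (u_int : u \in A) (y0_int : y0 \in A).
Hypotheses (red_u : rd u = ((red_poly P)^`().[t])^-1) (red_y0 : rd y0 = t).
Hypothesis t_simple : (red_poly P)^`().[t] != 0.

(* Newton's method with the fixed slope u, a lift of 1 / (red_poly P)'(t):
   each step gains one power of pi in the valuation of P.[y]. *)
Definition newton k := iter k (fun y => y - P.[y] * u) y0.

Lemma newtonS k : newton k.+1 = newton k - P.[newton k] * u.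
Proof. by []. Qed.

Lemma newton_inv k :
  [/\ newton k \in A, rd (newton k) = t & vge v P.[newton k] k.+1%:Z].
Proof.
elim: k => [|k [yA red_y Py]] /=.
  split=> //; apply/(red_ker (horner_inA y0_int)).
  by rewrite red_horner // red_y0; apply/eqP.
set y := newton k; set y' := y - P.[y] * u.
have Pyu_int : P.[y] * u \in A by rewrite rpredM ?horner_inA.
have Pyu_vge : vge v (P.[y] * u) k.+1%:Z.
  by rewrite -[k.+1%:Z]addr0; apply: vgeM => //; apply/inAP.
have y'A : y' \in A by rewrite rpredB.
have red_y' : rd y' = t.
  rewrite redB // (red_ker Pyu_int).2 ?subr0 //.
  by apply: vge_le Pyu_vge; rewrite lez_nat.
split=> //.
have Qint := diffq_inA yA y'A.
have ->: P.[y'] = P.[y] * (1 - u * diffq P y y').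
  rewrite -[P.[y']](subrK P.[y]) hornerB_diffq /y' addrAC subrr add0r.
  by rewrite mulrBr mulr1 mulNr mulrA addrC.
have unit_vge : vge v (1 - u * diffq P y y') 1.
  have wA : 1 - u * diffq P y y' \in A by rewrite rpredB ?rpred1 ?rpredM.
  apply/(red_ker wA).1.
  rewrite redB ?rpredM ?rpred1 // red1 redM // red_u (red_diffq yA y'A) ?red_y ?red_y' //.
  by rewrite mulVf ?subrr.
by apply: vge_le (vgeM Py unit_vge); rewrite -PoszD addn1.
Qed.

Lemma newton_cauchy M j : vge v (newton (M + j) - newton M) M.+1%:Z.
Proof.
elim: j => [|j IH]; first by rewrite addn0 subrr; left.
rewrite addnS newtonS addrAC; apply: vgeB => //.
have [yA _ Py] := newton_inv (M + j).
rewrite -[M.+1%:Z]addr0; apply: vgeM; last by apply/inAP.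
by apply: vge_le Py; rewrite lez_nat ltnS leq_addr.
Qed.

Lemma newton_root : exists2 y, y \in A & rd y = t /\ root P y.
Proof.
have [L L_lim] : exists L, forall N : int, exists M : nat, forall n : nat, (M <= n)%N ->
    vge v (newton n - L) N.
  apply: (@complete _ _ D) => N; exists `|N|%N => m n Mm Mn.
  rewrite -(subnKC Mm) -(subnKC Mn); set y := newton `|N|%N.
  rewrite -[X in X - _](subrK y) -[X in _ - X](subrK y) opprD addrACA subrr addr0.
  by apply: vgeB; apply: vge_le (newton_cauchy _ _); lia.
have [M0 LM0] := L_lim 1.
have [yA red_y _] := newton_inv M0.
have dA : newton M0 - L \in A by apply/inAP; apply: vge_le (LM0 M0 (leqnn _)).
have LA : L \in A by rewrite -[L](subKr (newton M0)) rpredB.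
have red_L : rd L = t.
  by rewrite -[L](subKr (newton M0)) redB // ((red_ker dA).2 (LM0 _ (leqnn _))) subr0.
exists L => //; split=> //; apply: contraT => PL_neq0.
set w := v P.[L]; have [M1 LM1] := L_lim (w + 1).
set k := maxn M1 `|w + 1|; have [ykA _ Pyk] := newton_inv k.
have : vge v P.[L] (w + 1).
  rewrite -[P.[L]](subrK P.[newton k]) -opprB hornerB_diffq addrC.
  apply: vgeB; first by apply: vge_le Pyk; lia.
  rewrite -[w + 1]addr0; apply: vgeM; first by apply: LM1; rewrite leq_maxl.
  by apply/inAP; apply: diffq_inA.
by case=> [PL0|]; [rewrite /root PL0 eqxx in PL_neq0|rewrite /w; lia].
Qed.

End NewtonIteration.

Lemma hensel_lift t : root (red_poly P) t -> (red_poly P)^`().[t] != 0 ->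
  exists2 y, y \in A & rd y = t /\ root P y.
Proof.
move=> t_root t_simple.
have [u u_int red_u] := red_surj D ((red_poly P)^`().[t])^-1.
have [y0 y0_int red_y0] := red_surj D t.
exact: newton_root t_root u_int y0_int red_u red_y0 t_simple.
Qed.

End IntegralPoly.

Lemma val_mul_unif x k : x != 0 -> v (x * pi ^+ k) = v x + k%:Z.
Proof. by move=> x_neq0; rewrite (v_mul D x_neq0) ?expf_neq0 ?unif_neq0 // val_unifX. Qed.

Lemma val_div_unif x k : x != 0 -> v (x / pi ^+ k) = v x - k%:Z.
Proof.
have pik_neq0 : pi ^+ k != 0 by rewrite expf_neq0 ?unif_neq0.
by move=> x_neq0; rewrite (v_mul D x_neq0) ?invr_neq0 // val_inv // val_unifX.
Qed.

Definition binomial_root_count (n : nat) (a : K) : nat :=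
  if (n%:Z %| v a)%Z && [exists y : kappa, y ^+ n == - delta D a]
  then gcdn n (#|kappa| - 1) else 0%N.

Section NonzeroRoots.
Variables (n : nat) (f : {poly K}).
Hypotheses (n_neq0 : n%:R != 0 :> kappa) (f_monic : f \is monic) (f_size : size f = n.+1).
Hypotheses (f_int : forall i, f`_i \in A) (f0_neq0 : f`_0 != 0).
Hypothesis f_slope : forall i, (0 < i < n)%N -> f`_i != 0 ->
  n%:Z * v f`_0 < n%:Z * v f`_i + i%:Z * v f`_0.

Let n_gt0 : (0 < n)%N := natr_neq0_gt0 n_neq0.

Lemma f_lead : f`_n = 1.
Proof. by move/monicP: f_monic; rewrite lead_coefE f_size. Qed.

Lemma f_slope_le i : (i <= n)%N -> f`_i != 0 ->
  n%:Z * v f`_0 <= n%:Z * v f`_i + i%:Z * v f`_0.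
Proof.
rewrite leq_eqVlt => /orP[/eqP->|i_lt_n fi_neq0]; first by rewrite f_lead val_one mulr0 add0r.
have [->|i_gt0] := posnP i; first by rewrite mul0r addr0.
by apply/ltW/f_slope; rewrite ?i_gt0.
Qed.

Lemma val_nonzero_root x : x != 0 -> root f x -> n%:Z * v x = v f`_0.
Proof.
move=> x_neq0 /rootP; rewrite horner_coef f_size => fx0.
have val_term i : f`_i != 0 -> v (f`_i * x ^+ i) = v f`_i + i%:Z * v x.
  by move=> fi_neq0; rewrite (v_mul D fi_neq0) ?expf_neq0 // val_exp.
have [top|bottom|//] := ltrgtP (n%:Z * v x) (v f`_0);
  [suff: \sum_(i < n.+1) f`_i * x ^+ i != 0 by rewrite fx0 eqxx..].
- apply: (sum_dominant_neq0 (i0 := ord_max)) => [|i i_neq_n]; first by rewrite f_lead mul1r expf_neq0.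
  rewrite f_lead mul1r val_exp //.
  have [->|fi_neq0] := eqVneq f`_i 0; first by rewrite mul0r; left.
  have i_lt_n : (i < n)%N.
    by rewrite ltn_neqAle -ltnS ltn_ord andbT; apply: contra i_neq_n => /eqP i_n; apply/eqP/val_inj.
  by right; rewrite val_term //; apply: dominant_top top (f_slope_le (ltnW i_lt_n) fi_neq0).
- apply: (sum_dominant_neq0 (i0 := ord0)) => [|i i_neq0]; first by rewrite expr0 mulr1.
  rewrite expr0 mulr1; have [->|fi_neq0] := eqVneq f`_i 0; first by rewrite mul0r; left.
  have i_gt0 : (0 < i)%N by rewrite lt0n; apply: contra i_neq0 => /eqP i_0; apply/eqP/val_inj.
  by right; rewrite val_term //; apply: dominant_bottom bottom (f_slope_le (leq_ord i) fi_neq0).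
Qed.

Lemma nonzero_roots_nondvd : ~~ (n%:Z %| v f`_0)%Z -> has_nonzero_roots f 0.
Proof.
move=> l_ndvd; exists [::]; split=> // x; rewrite in_nil; apply/esym/negbTE.
apply: contra l_ndvd => /andP[x_neq0 fx].
by rewrite -(val_nonzero_root x_neq0 fx); apply/dvdzP; exists (v x); rewrite mulrC.
Qed.

Section Rescaling.
Variable m : nat.
Hypothesis val_f0 : v f`_0 = (n * m)%N.

Definition rescaled : {poly K} := \poly_(i < n.+1) (f`_i * pi ^+ (m * i) / pi ^+ (m * n)).

Lemma coef_rescaled i : rescaled`_i = f`_i * pi ^+ (m * i) / pi ^+ (m * n).
Proof.
by rewrite coef_poly; case: ltnP => // i_big; rewrite nth_default ?f_size // !mul0r.
Qed.

Lemma horner_rescaled y : f.[pi ^+ m * y] = pi ^+ (m * n) * rescaled.[y].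
Proof.
rewrite horner_poly horner_coef f_size mulr_sumr; apply: eq_bigr => i _.
by rewrite exprMn -exprM [RHS]mulrCA [RHS]mulrA divfK ?expf_neq0 ?unif_neq0 // mulrA.
Qed.

Lemma rescaled_lead : rescaled`_n = 1.
Proof. by rewrite coef_rescaled f_lead mul1r divff // expf_neq0 ?unif_neq0. Qed.

Lemma rescaled_coef0 : rescaled`_0 = f`_0 / pi ^ v f`_0.
Proof. by rewrite coef_rescaled muln0 expr0 mulr1 val_f0 mulnC. Qed.

Lemma rescaled_mid i : (0 < i < n)%N -> vge v rescaled`_i 1.
Proof.
move=> i_mid; rewrite coef_rescaled.
have [->|fi_neq0] := eqVneq f`_i 0; first by rewrite !mul0r; left.
right; rewrite val_div_unif ?val_mul_unif ?mulf_neq0 ?expf_neq0 ?unif_neq0 //.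
by have := f_slope i_mid fi_neq0; rewrite val_f0; nia.
Qed.

Lemma rescaled_int i : rescaled`_i \in A.
Proof.
have [->|i_gt0] := posnP i.
  by rewrite rescaled_coef0; apply/inAP; right; rewrite val_delta_quot.
have [i_lt_n|i_gt_n|->] := ltngtP i n.
- by apply/inAP; apply: (vge_le _ (rescaled_mid _)); rewrite ?i_gt0.
- by rewrite coef_rescaled nth_default ?f_size // !mul0r rpred0.
- by rewrite rescaled_lead rpred1.
Qed.

Lemma red_poly_rescaled : red_poly rescaled = 'X^n + (delta D f`_0)%:P.
Proof.
apply/polyP => i; rewrite coef_red_poly coefD coefXn coefC.
have [->|i_gt0] := posnP i; first by rewrite rescaled_coef0 (ltn_eqF n_gt0) add0r.
rewrite addr0; have [i_lt_n|i_gt_n|->] := ltngtP i n; last by rewrite rescaled_lead red1.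
- by apply/(@red_ker _ _ D _ (rescaled_int i)); apply: rescaled_mid; rewrite i_gt0.
- by rewrite coef_rescaled nth_default ?f_size // !mul0r red0.
Qed.

Lemma root_rescaled y : root f (pi ^+ m * y) = root rescaled y.
Proof. by rewrite /root horner_rescaled mulf_eq0 expf_eq0 (negbTE (unif_neq0 D)) andbF. Qed.

Lemma root_red_poly_rescaled t :
  root (red_poly rescaled) t = (t ^+ n == - delta D f`_0).
Proof. by rewrite /root red_poly_rescaled hornerD hornerXn hornerC addr_eq0. Qed.

Lemma red_poly_rescaled_simple t : t != 0 -> (red_poly rescaled)^`().[t] != 0.
Proof.
move=> t_neq0; rewrite red_poly_rescaled derivD derivC addr0 derivXn.
by rewrite hornerMn hornerXn -mulr_natr mulf_neq0 ?expf_neq0.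
Qed.

Lemma rescale_nonzero_root x : x != 0 -> root f x ->
  [/\ x / pi ^+ m \in A, root rescaled (x / pi ^+ m)
    & rd (x / pi ^+ m) ^+ n == - delta D f`_0].
Proof.
move=> x_neq0 fx; have val_x : v x = m.
  have nZ_neq0 : n%:Z != 0 by rewrite eqz_nat -lt0n n_gt0.
  by apply: (mulfI nZ_neq0); rewrite val_nonzero_root // val_f0 PoszM.
have y_int : x / pi ^+ m \in A by apply/inAP; right; rewrite val_div_unif // val_x subrr.
have y_root : root rescaled (x / pi ^+ m).
  by rewrite -root_rescaled mulrC divfK ?expf_neq0 ?unif_neq0.
split=> //; rewrite -root_red_poly_rescaled /root -(red_horner rescaled_int y_int).
by rewrite (eqP y_root) red0.
Qed.

Lemma nonzero_roots_dvd :
  has_nonzero_roots f #|[pred z : kappa | z ^+ n == - delta D f`_0]|.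
Proof.
have c_neq0 : pi ^+ m != 0 by rewrite expf_neq0 ?unif_neq0.
have root_neq0 t : t ^+ n == - delta D f`_0 -> t != 0.
  apply: contraTneq => ->; rewrite expr0n (gtn_eqF n_gt0) eq_sym oppr_eq0.
  exact: delta_neq0.
apply: (has_nonzero_roots_bij (phi := fun x => rd (x / pi ^+ m))).
- move=> x1 x2 /andP[x1_neq0 fx1] /andP[x2_neq0 fx2] /= e.
  have [y1_int y1_root /root_neq0 y1_red] := rescale_nonzero_root x1_neq0 fx1.
  have [y2_int y2_root _] := rescale_nonzero_root x2_neq0 fx2.
  apply: (divIf c_neq0); apply: (hensel_unique rescaled_int) => //.
  exact: red_poly_rescaled_simple.
- by move=> x /andP[x_neq0 fx]; rewrite inE; have [] := rescale_nonzero_root x_neq0 fx.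
move=> z; rewrite inE => zn.
have z_root : root (red_poly rescaled) z by rewrite root_red_poly_rescaled.
have z_simple := red_poly_rescaled_simple (root_neq0 z zn).
have [y y_int [red_y y_root]] := hensel_lift rescaled_int z_root z_simple.
exists (pi ^+ m * y); last by rewrite [_ * y]mulrC mulfK.
rewrite root_rescaled y_root andbT mulf_neq0 //.
by apply: contra_neq (root_neq0 z zn) => y0; rewrite -red_y y0 red0.
Qed.

End Rescaling.

Lemma nonzero_roots_count : has_nonzero_roots f (binomial_root_count n f`_0).
Proof.
rewrite /binomial_root_count; have [/dvdzP[q l_eq]|l_ndvd] /= := boolP (n%:Z %| v f`_0)%Z.
  have l_ge0 : 0 <= v f`_0.
    by case/inAP: (f_int 0) => [f00|//]; move: f0_neq0; rewrite f00 eqxx.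
  have val_f0 : v f`_0 = (n * `|q|)%N by move: l_ge0; rewrite l_eq; nia.
  rewrite -card_nth_roots ?oppr_eq0 ?delta_neq0 //; exact: nonzero_roots_dvd val_f0.
exact: nonzero_roots_nondvd.
Qed.

End NonzeroRoots.

Lemma binomial_nonzero_roots n a : n%:R != 0 :> kappa -> a != 0 -> a \in A ->
  has_nonzero_roots ('X^n + a%:P) (binomial_root_count n a).
Proof.
move=> n_neq0 a_neq0 a_int; have n_gt0 := natr_neq0_gt0 n_neq0.
have coef0 : ('X^n + a%:P)`_0 = a by rewrite coefD coefXn coefC (ltn_eqF n_gt0) add0r.
rewrite -[in binomial_root_count _ a]coef0; apply: nonzero_roots_count => //.
- exact: monicXnaddC.
- exact: size_XnaddC.
- by apply/polyOverP; rewrite polyOverXnaddC.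
- by rewrite coef0.
- move=> i /andP[i_gt0 i_lt_n].
  by rewrite coefD coefXn coefC (ltn_eqF i_lt_n) (gtn_eqF i_gt0) addr0 eqxx.
Qed.

End Valuation.

Theorem theorem4p5 (K : fieldType) (kappa : finFieldType) (D : cdvf K kappa)
    (p : nat) (n : nat) (f : {poly K}) :
  p \in [pchar kappa] ->
  (1 <= n)%N -> ~~ (p %| n)%N ->
  f \is monic -> size f = n.+1 ->
  (forall i, inA (val_v D) f`_i) ->
  f`_0 != 0 ->
  (forall i : nat, (1 <= i <= n.-1)%N -> f`_(n - i) != 0 ->
     (i%:Z * val_v D f`_0 < n%:Z * val_v D f`_(n - i))%R) ->
  let l := val_v D f`_0 in
  let g := 'X^n + (f`_0)%:P in
  [/\ forall N : nat, has_nonzero_roots f N <-> has_nonzero_roots g N,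
      ~~ (n%:Z %| l)%Z -> has_nonzero_roots f 0
    & (n%:Z %| l)%Z ->
      has_nonzero_roots f
        (if [exists y : kappa, y ^+ n == - delta D f`_0]
         then gcdn n (#|kappa| - 1) else 0%N)].
Proof.
move=> p_char _ p_ndvd_n f_monic f_size f_int f0_neq0 f_slope l g.
have n_neq0 : n%:R != 0 :> kappa by rewrite -(dvdn_pcharf p_char).
have slope i : (0 < i < n)%N -> f`_i != 0 -> n%:Z * l < n%:Z * val_v D f`_i + i%:Z * l.
  move=> /andP[i_gt0 i_lt_n] fi_neq0.
  have := f_slope (n - i)%N; rewrite subKn ?(ltnW i_lt_n) // => /(_ _ fi_neq0).
  by rewrite /l; lia.
have Rf := nonzero_roots_count n_neq0 f_monic f_size f_int f0_neq0 slope.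
have Rg := binomial_nonzero_roots n_neq0 f0_neq0 (f_int 0).
split.
- by move=> N; split=> [/(has_nonzero_roots_unique Rf)<-|/(has_nonzero_roots_unique Rg)<-].
- by move=> l_ndvd; move: Rf; rewrite /binomial_root_count (negbTE l_ndvd).
- by move=> l_dvd; move: Rf; rewrite /binomial_root_count l_dvd.
Qed.
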